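(* Let $(Z,\mathbb{Z}^k,S)$ be an aperiodic zero-dimensional system. For every $R>0$ there is $L_0>0$ such that for every positive integer $L\ge L_0$ and every clopen $U\subset Z$ with $Z=\bigcup_{|n|<L}S^nU$ and $U\cap S^nU=\emptyset$ for $0<|n|<L$, the following holds: for every $x\in Z$ and every $n\in C(x)$, \[\frac{|\partial^{\mathbb{Z}}_RV^{\mathbb{Z}}(x,n)|}{|V^{\mathbb{Z}}(x,n)|}<\frac1R.\]
   Context: Given such $L$ and $U$: $C(x)=\{n\in\mathbb{Z}^k: S^nx\in U\}$; for $n\in C(x)$, $V(x,n)=\{u\in\mathbb{R}^k:|u-n|\le|u-m|\ \forall m\in C(x)\}$ (Euclidean norm) and $V^{\mathbb{Z}}(x,n)=V(x,n)\cap\mathbb{Z}^k$. For $\Omega\subset\mathbb{Z}^k$ and $R>0$, $\partial^{\mathbb{Z}}_R\Omega$ is the set of $n\in\mathbb{Z}^k$ for which there exist $m\in\Omega$ and $m'\in\mathbb{Z}^k\setminus\Omega$ with $|n-m|\le R$ and $|n-m'|\le R$. Aperiodic: the action is free; zero-dimensional: clopen sets form a basis. *)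

From HB Require Import structures.
From mathcomp Require Import all_boot all_order all_algebra.
From mathcomp Require Import all_classical all_reals.
From mathcomp Require Import finmap topology.
Set Implicit Arguments. Unset Strict Implicit. Unset Printing Implicit Defensive.
Import Order.TTheory GRing.Theory Num.Theory.
Local Open Scope classical_set_scope.
Local Open Scope ring_scope.

Notation Zk k := 'rV[int]_k.

Definition toR {R : realType} {k : nat} (n : Zk k) : 'rV[R]_k := map_mx intr n.

Definition enorm {R : realType} {k : nat} (u : 'rV[R]_k) : R :=
  Num.sqrt (\sum_(i < k) u 0 i ^+ 2).

Definition znorm {R : realType} {k : nat} (n : Zk k) : R := enorm (toR n).

Definition is_action {k : nat} {Z : topologicalType} (S : Zk k -> Z -> Z) :=
  (forall x, S 0 x = x) /\ (forall m n x, S (m + n) x = S m (S n x)) /\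
  (forall n, continuous (S n)).

(* aperiodic: the action is free *)
Definition free_action {k : nat} {Z : Type} (S : Zk k -> Z -> Z) :=
  forall n x, S n x = x -> n = 0.

Definition zero_dim (Z : topologicalType) :=
  forall (x : Z) (A : set Z), open A -> A x ->
    exists B : set Z, clopen B /\ B x /\ B `<=` A.

Definition Cset {k : nat} {Z : Type} (S : Zk k -> Z -> Z) (U : set Z) (x : Z)
  : set (Zk k) := [set n | U (S n x)].

Definition Vcell {R : realType} {k : nat} {Z : Type} (S : Zk k -> Z -> Z)
  (U : set Z) (x : Z) (n : Zk k) : set 'rV[R]_k :=
  [set u | forall m, Cset S U x m -> enorm (u - toR n) <= enorm (u - toR m)].

Definition VcellZ (R : realType) {k : nat} {Z : Type} (S : Zk k -> Z -> Z)
  (U : set Z) (x : Z) (n : Zk k) : set (Zk k) :=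
  [set m | Vcell (R:=R) S U x n (toR m)].

Definition bdryZ {R : realType} {k : nat} (r : R) (Om : set (Zk k)) : set (Zk k) :=
  [set n | (exists m, Om m /\ znorm (n - m) <= r) /\
           (exists m', ~ Om m' /\ znorm (n - m') <= r)].

From HB Require Import structures.
From mathcomp Require Import all_boot all_order all_algebra.
From mathcomp Require Import all_classical all_reals.
From mathcomp Require Import finmap topology.
From mathcomp Require Import ring lra zify.

Set Implicit Arguments.
Unset Strict Implicit.
Unset Printing Implicit Defensive.

Import Order.TTheory GRing.Theory Num.Theory.
Local Open Scope classical_set_scope.
Local Open Scope ring_scope.

(* The return times [C(x)] of [x] to [U] form an [L]-separated, [L]-dense subset of
   [Z^k].  Hence the Voronoi cell [V] of a centre [n] contains the cube of half-side
   [L / 2k] about [n], so [|V| >= (2 (L / 2k) + 1)^k], and lies in the ball of radius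
   [L] about [n].  A point [p] of the [r]-boundary is within [r] of a point [b] that is
   strictly closer to another centre [c]; choose a coordinate [i] where [|(c - n)_i|] is
   maximal.  By Cauchy-Schwarz, moving [p] by [t] in the direction [sign((c - n)_i) e_i]
   leaves the [r]-neighbourhood of [V] once [t^2 >= 4 r^2 k].  So boundary points with
   the same [(i, sign)] lying on a common line parallel to [e_i] are less than [2 P k]
   apart ([P > r]), and a boundary point is determined by its direction, its other
   coordinates and its [i]-th coordinate modulo [2 P k].  This gives
   [|dV| <= 4 P k^2 (2 (L + P) + 1)^(k-1)], which is [o(|V| / P)] as [L] grows. *)

Section IntegerInnerProduct.
Variable k : nat.
Implicit Types u v w d : Zk k.

Definition dotz u v : int := \sum_(i < k) u 0 i * v 0 i.
Definition sqnormz v : int := dotz v v.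

Lemma dotzC u v : dotz u v = dotz v u.
Proof. by apply: eq_bigr => i _; rewrite mulrC. Qed.

Lemma dotzDl u v w : dotz (u + v) w = dotz u w + dotz v w.
Proof. by rewrite /dotz -big_split; apply: eq_bigr => i _; rewrite !mxE mulrDl. Qed.

Lemma dotzNl u w : dotz (- u) w = - dotz u w.
Proof. by rewrite /dotz -sumrN; apply: eq_bigr => i _; rewrite !mxE mulNr. Qed.

Lemma dotzBl u v w : dotz (u - v) w = dotz u w - dotz v w.
Proof. by rewrite dotzDl dotzNl. Qed.

Lemma dotzZl a u w : dotz (a *: u) w = a * dotz u w.
Proof. by rewrite /dotz mulr_sumr; apply: eq_bigr => i _; rewrite !mxE mulrA. Qed.

Lemma dotzDr u v w : dotz w (u + v) = dotz w u + dotz w v.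
Proof. by rewrite dotzC dotzDl !(dotzC w). Qed.

Lemma dotzNr u w : dotz w (- u) = - dotz w u.
Proof. by rewrite dotzC dotzNl dotzC. Qed.

Lemma dotzZr a u w : dotz w (a *: u) = a * dotz w u.
Proof. by rewrite dotzC dotzZl dotzC. Qed.

Lemma dotz_delta i d : dotz (delta_mx 0 i) d = d 0 i.
Proof.
rewrite /dotz (bigD1 i) //= big1 ?addr0 => [|j ji]; first by rewrite mxE !eqxx mul1r.
by rewrite mxE (negbTE ji) andbF mul0r.
Qed.

Lemma sqr_coord_le_sqnormz v i : v 0 i ^+ 2 <= sqnormz v.
Proof.
rewrite /sqnormz /dotz (bigD1 i) //= -expr2 lerDl.
by apply: sumr_ge0 => j _; rewrite -expr2 sqr_ge0.
Qed.

Lemma sqnormz_ge0 v : 0 <= sqnormz v.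
Proof. by apply: sumr_ge0 => i _; rewrite -expr2 sqr_ge0. Qed.

Lemma sqnormz_eq0 v : sqnormz v = 0 -> v = 0.
Proof.
move=> v0; apply/rowP => i; rewrite mxE; apply/eqP.
by rewrite -sqrf_eq0 eq_le sqr_ge0 -v0 sqr_coord_le_sqnormz.
Qed.

Lemma sqnormzD u v : sqnormz (u + v) = sqnormz u + 2 * dotz u v + sqnormz v.
Proof. by rewrite /sqnormz dotzDl !dotzDr (dotzC v u); ring. Qed.

Lemma sqnormzN u : sqnormz (- u) = sqnormz u.
Proof. by rewrite /sqnormz dotzNl dotzNr opprK. Qed.

Lemma sqnormzB u v : sqnormz (u - v) = sqnormz u - 2 * dotz u v + sqnormz v.
Proof. by rewrite sqnormzD sqnormzN dotzNr; ring. Qed.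

Lemma sqnormzZ a u : sqnormz (a *: u) = a ^+ 2 * sqnormz u.
Proof. by rewrite /sqnormz dotzZl dotzZr mulrA expr2. Qed.

Lemma sqnormzBC u v : sqnormz (u - v) = sqnormz (v - u).
Proof. by rewrite -sqnormzN opprB. Qed.

Lemma sqnormzB_shift m n c :
  sqnormz (m - c) = sqnormz (m - n) - 2 * dotz (m - n) (c - n) + sqnormz (c - n).
Proof. by rewrite -sqnormzB opprB addrA subrK. Qed.

Lemma sqnormzD_le u v : sqnormz (u + v) <= 2 * sqnormz u + 2 * sqnormz v.
Proof. by have := sqnormz_ge0 (u - v); rewrite sqnormzB sqnormzD; lra. Qed.

Lemma dotz_sqr_le u v : dotz u v ^+ 2 <= sqnormz u * sqnormz v.
Proof.
have [u0|u_neq0] := eqVneq (sqnormz u) 0.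
  have uv0 : dotz u v = 0.
    by rewrite (sqnormz_eq0 u0) /dotz big1 // => i _; rewrite mxE mul0r.
  by rewrite uv0 u0 mul0r expr0n.
have u_gt0 : 0 < sqnormz u by rewrite lt_def u_neq0 sqnormz_ge0.
have := sqnormz_ge0 (dotz u v *: u - sqnormz u *: v).
rewrite sqnormzB /sqnormz !dotzZl !dotzZr -/(sqnormz u) -/(sqnormz v) => h.
rewrite -subr_ge0 -(pmulr_rge0 _ u_gt0); lra.
Qed.

Lemma coord_lt_of_sqnormz v (L : nat) j : sqnormz v < (L ^ 2)%:Z -> (absz (v 0 j)%R < L)%N.
Proof. by have := sqr_coord_le_sqnormz v j; rewrite expr2; nia. Qed.

Lemma coord_le_of_sqnormz v (L : nat) j : sqnormz v <= (L ^ 2)%:Z -> (absz (v 0 j)%R <= L)%N.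
Proof. by have := sqr_coord_le_sqnormz v j; rewrite expr2; nia. Qed.

Lemma le_sqnormzB m n c :
  (sqnormz (m - n) <= sqnormz (m - c)) = (2 * dotz (m - n) (c - n) <= sqnormz (c - n)).
Proof. by rewrite (sqnormzB_shift m n c); apply/idP/idP; lra. Qed.

Lemma lt_sqnormzB m n c :
  (sqnormz (m - c) < sqnormz (m - n)) = (sqnormz (c - n) < 2 * dotz (m - n) (c - n)).
Proof. by rewrite (sqnormzB_shift m n c); apply/idP/idP; lra. Qed.

Lemma dominant_coord d : d != 0 ->
  exists2 i, d 0 i != 0 & sqnormz d <= k%:Z * d 0 i ^+ 2.
Proof.
move=> d_neq0; have [i0 di0_neq0] : exists i0, d 0 i0 != 0.
  apply/existsP; apply: contraNT d_neq0 => /existsPn d0.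
  by apply/eqP/rowP => i; rewrite mxE; exact/eqP/negbNE/d0.
have [i _ imax] := @arg_maxnP _ i0 xpredT (fun i => absz (d 0 i)) isT.
exists i; first by have := imax i0 isT; apply: contraTneq => -> /=; rewrite leqn0 absz_eq0.
rewrite /sqnormz /dotz -natz mulr_natl -[k in _ *+ k]card_ord -sumr_const.
by apply: ler_sum => j _; have := imax j isT; nia.
Qed.

Lemma dotz_dominant_coord w d i (t : int) : 0 <= t -> d 0 i != 0 ->
  sqnormz d <= k%:Z * d 0 i ^+ 2 -> t * `|d 0 i| < dotz w d ->
  t ^+ 2 < k%:Z * sqnormz w.
Proof.
move=> t_ge0 di_neq0 d_dom t_lt.
have di_gt0 : 0 < d 0 i ^+ 2 by rewrite lt_def sqr_ge0 sqrf_eq0 di_neq0.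
rewrite -(ltr_pM2r di_gt0); apply: (lt_le_trans (y := dotz w d ^+ 2)).
  rewrite -[d 0 i ^+ 2]real_normK ?num_real // -exprMn.
  by rewrite ltr_pXn2r // ?nnegrE ?mulr_ge0 // (le_trans _ (ltW t_lt)) ?mulr_ge0.
apply: (le_trans (dotz_sqr_le w d)); rewrite [k%:Z * _]mulrC -mulrA.
by apply: ler_wpM2l => //; exact: sqnormz_ge0.
Qed.

End IntegerInnerProduct.

Section RealNorms.
Variables (R : realType) (k : nat).
Implicit Types u v : Zk k.

Lemma toRB u v : toR (R:=R) (u - v) = toR u - toR v.
Proof. by apply/rowP => i; rewrite !mxE rmorphB. Qed.

Lemma znormE v : znorm (R:=R) v = Num.sqrt (sqnormz v)%:~R.
Proof.
rewrite /znorm /enorm /sqnormz /dotz rmorph_sum; congr Num.sqrt.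
by apply: eq_bigr => i _; rewrite !mxE rmorphM expr2.
Qed.

Lemma znorm_le v (r : R) : 0 <= r -> (znorm v <= r) = ((sqnormz v)%:~R <= r ^+ 2).
Proof.
by move=> r_ge0; rewrite znormE -[in LHS](ger0_norm r_ge0) -sqrtr_sqr ler_sqrt ?sqr_ge0.
Qed.

Lemma znorm_lt v (L : nat) : (znorm (R:=R) v < L%:R) = (sqnormz v < (L ^ 2)%:Z).
Proof.
rewrite -(ltr_int R) -[((L ^ 2)%:Z)%:~R]/((L ^ 2)%:R) natrX.
rewrite znormE -[in LHS](@ger0_norm _ L%:R) // -sqrtr_sqr.
have [->|L_gt0] := posnP L; last by rewrite ltr_sqrt ?exprn_gt0 ?ltr0n.
by rewrite expr0n /= sqrtr0 !ltNge sqrtr_ge0 ler0z sqnormz_ge0.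
Qed.

Lemma znorm_le_znorm u v : (znorm (R:=R) u <= znorm v) = (sqnormz u <= sqnormz v).
Proof. by rewrite !znormE ler_sqrt ?ler0z ?sqnormz_ge0 // ler_int. Qed.

End RealNorms.

Section Boxes.
Variables (k : nat) (n : Zk k) (H : nat).

Definition boxZ : set (Zk k) := [set p | forall j, (absz (p 0 j - n 0 j)%R <= H)%N].

Definition boxpt (f : {ffun 'I_k -> 'I_(2 * H).+1}) : Zk k :=
  \row_j (n 0 j + (f j)%:Z - H%:Z).

Definition boxcode (p : Zk k) (j : 'I_k) : 'I_(2 * H).+1 :=
  inord (absz (p 0 j - n 0 j + H%:Z)%R).

Lemma boxcodeE p j : boxZ p -> (boxcode p j)%:Z = p 0 j - n 0 j + H%:Z.
Proof. by move=> /(_ j) box_p; rewrite inordK; lia. Qed.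

Lemma boxpt_inj : injective boxpt.
Proof.
move=> f g /rowP fg; apply/ffunP => j; apply/val_inj.
by have := fg j; rewrite !mxE => /addIr/addrI [].
Qed.

Lemma boxptK p : boxZ p -> boxpt [ffun j => boxcode p j] = p.
Proof. by move=> box_p; apply/rowP => j; rewrite mxE ffunE boxcodeE //; ring. Qed.

Lemma boxZ_finite : finite_set boxZ.
Proof.
apply: sub_finite_set (finite_image boxpt (@finite_finset _ setT)) => p box_p.
by exists [ffun j => boxcode p j]; rewrite ?boxptK.
Qed.

Lemma sqnormz_boxpt_le f : sqnormz (boxpt f - n) <= (k * H ^ 2)%N%:Z.
Proof.
rewrite /sqnormz /dotz PoszM -natz mulr_natl -[k in _ *+ k]card_ord -sumr_const.
apply: ler_sum => j _; rewrite !mxE -expr2.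
have -> : n 0 j + (f j)%:Z - H%:Z - n 0 j = (f j)%:Z - H%:Z by ring.
by have := ltn_ord (f j); nia.
Qed.

End Boxes.

Lemma geq_card_fset_set_inj (T : choiceType) (F : finType) (A : set T) (f : T -> F) :
  finite_set A -> {in A &, injective f} -> (#|` fset_set A| <= #|F|)%N.
Proof.
move=> finA f_inj.
have <- : #|` [fset f a | a in fset_set A]%fset| = #|` fset_set A|.
  apply: card_in_imfset => a b; rewrite !in_fset_set // => /set_mem Aa /set_mem Ab.
  by apply: f_inj; exact: mem_set.
by rewrite -[#|F|]card_finset fsubset_leq_card //; apply/fsubsetP => x; rewrite in_fset inE.
Qed.

Lemma leq_card_fset_set_inj (T : choiceType) (F : finType) (A : set T) (e : F -> T) :
  finite_set A -> injective e -> (forall x, A (e x)) -> (#|F| <= #|` fset_set A|)%N.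
Proof.
move=> finA e_inj eA.
have <- : #|` [fset e x | x in [fset x in F]%fset]%fset| = #|F|.
  by rewrite card_in_imfset ?card_finset // => x y _ _; exact: e_inj.
apply: fsubset_leq_card; apply/fsubsetP => _ /imfsetP[x _ ->].
by rewrite in_fset_set //; exact: mem_set.
Qed.

Lemma eqmodn_small (a b T : nat) : a = b %[mod T] -> (a < b + T)%N -> (b < a + T)%N -> a = b.
Proof.
wlog le_ab : a b / (a <= b)%N => [W eq_ab ab ba|].
  by case: (leqP a b) => [/W|/ltnW/W W']; [apply | symmetry; apply: W'].
move=> + _ lt_ba; rewrite -(subnKC le_ab) -[in LHS](addn0 a) => /eqP.
by rewrite eqn_modDl mod0n modn_small => [/eqP|]; lia.
Qed.

Definition voronoiZ k (C : set (Zk k)) (n : Zk k) : set (Zk k) :=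
  [set m | forall c, C c -> sqnormz (m - n) <= sqnormz (m - c)].

Definition boundaryZ (R : realType) k (r : R) (A : set (Zk k)) : set (Zk k) :=
  [set p | (exists a, A a /\ (sqnormz (p - a))%:~R <= r ^+ 2) /\
           (exists b, ~ A b /\ (sqnormz (p - b))%:~R <= r ^+ 2)].

Lemma cube_side_sqr_le k L : (4 * k * (L %/ (2 * k)) ^ 2 <= L ^ 2)%N.
Proof.
have : ((L %/ (2 * k) * (2 * k)) ^ 2 <= L ^ 2)%N by rewrite leq_exp2r ?leq_divM.
move: (L %/ _)%N => h; apply: leq_trans.
have k_le : (k <= k ^ 2)%N by case: k => // k; rewrite leq_pmulr.
nia.
Qed.

Section VoronoiCell.
Variables (R : realType) (k : nat) (C : set (Zk k)) (n : Zk k) (L : nat).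
Hypothesis C_dense : forall m, exists c, C c /\ sqnormz (m - c) < (L ^ 2)%:Z.
Hypothesis C_sep : forall c, C c -> c <> n -> (L ^ 2)%:Z <= sqnormz (c - n).

Local Notation V := (voronoiZ C n).

Lemma voronoiZ_sqnormz_lt m : V m -> sqnormz (m - n) < (L ^ 2)%:Z.
Proof. by move=> Vm; have [c [Cc lt_mc]] := C_dense m; exact: le_lt_trans (Vm c Cc) lt_mc. Qed.

Lemma voronoiZ_box : V `<=` boxZ n L.
Proof.
move=> m /voronoiZ_sqnormz_lt lt_mn j; apply: ltnW.
by have := coord_lt_of_sqnormz j lt_mn; rewrite !mxE.
Qed.

Lemma voronoiZ_finite : finite_set V.
Proof. exact: sub_finite_set voronoiZ_box (boxZ_finite n L). Qed.

(* Expanding [|2 (m - n) - (c - n)|^2 >= 0] gives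
   [4 <m - n, c - n> <= 4 |m - n|^2 + |c - n|^2 <= 2 |c - n|^2]. *)
Lemma voronoiZ_ball m : 4 * sqnormz (m - n) <= (L ^ 2)%:Z -> V m.
Proof.
move=> near_n c Cc; have [->|/eqP c_neq_n] := eqVneq c n; first by [].
have := C_sep Cc c_neq_n; rewrite le_sqnormzB.
have := sqnormz_ge0 ((2 : int) *: (m - n) - (c - n)).
by rewrite (sqnormzB ((2 : int) *: (m - n))) sqnormzZ dotzZl; lra.
Qed.

Lemma card_voronoiZ_ge : ((2 * (L %/ (2 * k))).+1 ^ k <= #|` fset_set V|)%N.
Proof.
have := cube_side_sqr_le k L; move: (L %/ (2 * k))%N => h cube_le.
have -> : ((2 * h).+1 ^ k)%N = #|{ffun 'I_k -> 'I_(2 * h).+1}| by rewrite card_ffun !card_ord.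
apply: leq_card_fset_set_inj voronoiZ_finite (@boxpt_inj k n h) _ => f.
apply: voronoiZ_ball; apply: le_trans (_ : _ <= 4 * (k * h ^ 2)%N%:Z) _.
  by rewrite ler_pM2l // sqnormz_boxpt_le.
by rewrite -[4]/(4%N%:Z) -PoszM lez_nat mulnA.
Qed.

Lemma voronoiZ_dotz_le a c : V a -> C c -> 2 * dotz (a - n) (c - n) <= sqnormz (c - n).
Proof. by move=> Va Cc; rewrite -le_sqnormzB; exact: Va. Qed.

Variables (r : R) (P : nat).
Hypotheses (r_gt0 : 0 < r) (r_le_P : r <= P%:R).

Local Notation B := (boundaryZ r V).

Lemma boundaryZ_near p : B p -> exists a, V a /\ sqnormz (p - a) <= (P ^ 2)%:Z.
Proof.
move=> [[a [Va pa]] _]; exists a; split => //.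
rewrite -(ler_int R) -[((P ^ 2)%:Z)%:~R]/((P ^ 2)%:R) natrX (le_trans pa) //.
by rewrite lerXn2r ?nnegrE ?ler0n ?(ltW r_gt0).
Qed.

Lemma boundaryZ_box : B `<=` boxZ n (L + P).
Proof.
move=> p /boundaryZ_near[a [/voronoiZ_sqnormz_lt an pa]] j.
have := coord_lt_of_sqnormz j an; have := coord_le_of_sqnormz j pa; rewrite !mxE.
by move: (p 0 j) (a 0 j) (n 0 j) => x y z; lia.
Qed.

Lemma boundaryZ_finite : finite_set B.
Proof. exact: sub_finite_set boundaryZ_box (boxZ_finite n (L + P)). Qed.

(* [b] is a point near [p] that is strictly closer to the centre [c] than to [n];
   [i] is a coordinate of [c - n] of maximal modulus and [s] its sign. *)
Definition boundary_dir (i : 'I_k) (s : bool) (p : Zk k) :=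
  exists b c, [/\ C c, (sqnormz (p - b))%:~R <= r ^+ 2, sqnormz (b - c) < sqnormz (b - n),
    sqnormz (c - n) <= k%:Z * (c - n) 0 i ^+ 2 & 0 < (-1) ^+ s * (c - n) 0 i].

Lemma boundary_dir_exists p : B p -> exists i s, boundary_dir i s p.
Proof.
move=> [_ [b [b_notin_V pb]]].
have [c [Cc bc]] : exists c, C c /\ sqnormz (b - c) < sqnormz (b - n).
  apply: contra_notP b_notin_V => no_c c Cc; rewrite leNgt; apply/negP => bc.
  by apply: no_c; exists c.
have cn_neq0 : c - n != 0.
  by apply: contraTneq bc => /eqP; rewrite subr_eq0 => /eqP ->; rewrite ltxx.
have [i di_neq0 dom] := dominant_coord cn_neq0.
by exists i, ((c - n) 0 i < 0), b, c; split; rewrite // -normrEsign normr_gt0.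
Qed.

(* With [q = p + t e] and [w = (b - p) + (q - a)], the point [b] lies beyond the bisector
   of [n] and [c] while [a] does not, so [<w, c - n> > t |(c - n)_i|]; since [|w| <= 2 r],
   Cauchy-Schwarz gives [t < 2 r sqrt k]. *)
Lemma boundary_dir_shift_sqr i s p (t : int) : boundary_dir i s p ->
  B (p + ((-1) ^+ s * t) *: delta_mx 0 i) -> 0 <= t ->
  (t ^+ 2)%:~R < 4 * r ^+ 2 * k%:R.
Proof.
move=> [b [c [Cc pb bc dom sgn_pos]]] [[a [Va qa]] _] t_ge0.
set q := p + _ in qa; set w := (b - p) + (q - a).
have w_dot : t * `|(c - n) 0 i| < dotz w (c - n).
  have -> : w = (b - n) - (a - n) + ((-1) ^+ s * t) *: delta_mx 0 i.
    by apply/rowP => j; rewrite /w /q !mxE; ring.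
  rewrite dotzDl (dotzBl (b - n)) dotzZl dotz_delta -(normrMsign s) gtr0_norm //.
  rewrite mulrAC [X in X < _]mulrC.
  rewrite ltr_pwDl // subr_gt0 -(ltr_pM2l (_ : 0 < 2)) //.
  by rewrite lt_sqnormzB in bc; exact: le_lt_trans (voronoiZ_dotz_le Va Cc) bc.
have w_le : (sqnormz w)%:~R <= 4 * r ^+ 2.
  have := sqnormzD_le (b - p) (q - a); rewrite -/w (sqnormzBC b) -(ler_int R).
  by rewrite rmorphD !rmorphM /= (_ : 2%:~R = 2 :> R) //; lra.
have di_neq0 : (c - n) 0 i != 0 by apply: contraTneq sgn_pos => ->; rewrite mulr0 ltxx.
have := dotz_dominant_coord t_ge0 di_neq0 dom w_dot.
rewrite -(ltr_int R) => /lt_le_trans; apply.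
by rewrite intrM mulrC; apply: ler_wpM2r => //; exact: ler0n.
Qed.

Lemma boundary_dir_shift_lt i s p (t : int) : boundary_dir i s p ->
  B (p + ((-1) ^+ s * t) *: delta_mx 0 i) -> 0 <= t -> t < (2 * P * k)%:Z.
Proof.
move=> dir Bq t_ge0; have t2 := boundary_dir_shift_sqr dir Bq t_ge0.
suff : t ^+ 2 < ((2 * P * k) ^ 2)%:Z by nia.
rewrite -(ltr_int R) -[((_ ^ 2)%:Z)%:~R]/((_ ^ 2)%:R) natrX !natrM (lt_le_trans t2) //.
have r2 : r ^+ 2 <= P%:R ^+ 2 by rewrite lerXn2r ?nnegrE ?ler0n ?(ltW r_gt0).
have kk : (k%:R : R) <= k%:R ^+ 2 by rewrite -natrX ler_nat; nia.
nra.
Qed.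

Lemma boundary_dir_line i s p p' : boundary_dir i s p -> boundary_dir i s p' ->
  B p -> B p' -> (forall j, j != i -> p' 0 j = p 0 j) ->
  `|p' 0 i - p 0 i| < (2 * P * k)%:Z.
Proof.
move=> dir dir' Bp Bp' off_i; set t := (-1) ^+ s * (p' 0 i - p 0 i).
have p'E : p' = p + ((-1) ^+ s * t) *: delta_mx 0 i.
  apply/rowP => j; rewrite !mxE /t signrMK; have [->|/off_i ->] := eqVneq j i.
    by rewrite eqxx mulr1 addrC subrK.
  by rewrite andbF mulr0 addr0.
rewrite -(normrMsign s) -/t; have [t_ge0|t_lt0] := leP 0 t.
  by rewrite ger0_norm //; apply: boundary_dir_shift_lt dir _ t_ge0; rewrite -p'E.
rewrite ltr0_norm //; apply: boundary_dir_shift_lt dir' _ _; last by rewrite oppr_ge0 ltW.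
by rewrite p'E mulrN scaleNr addrK.
Qed.

Lemma boundary_dir_code_inj i s p p' : boundary_dir i s p -> boundary_dir i s p' ->
  B p -> B p' -> (forall j, j != i -> boxcode n (L + P) p j = boxcode n (L + P) p' j) ->
  boxcode n (L + P) p i = boxcode n (L + P) p' i %[mod 2 * P * k] -> p = p'.
Proof.
move=> dir dir' Bp Bp' same_code same_res.
have [boxp boxp'] := (boundaryZ_box Bp, boundaryZ_box Bp').
have off_i j : j != i -> p' 0 j = p 0 j.
  move=> /same_code /(congr1 (fun x : 'I__ => x%:Z)).
  by rewrite !boxcodeE // => /addIr/addIr.
have eq_i : p' 0 i = p 0 i.
  have := boundary_dir_line dir dir' Bp Bp' off_i; rewrite ltr_norml => /andP[lo hi].
  have [ci ci'] := (boxcodeE i boxp, boxcodeE i boxp').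
  have : boxcode n (L + P) p i = boxcode n (L + P) p' i :> nat.
    by apply: eqmodn_small same_res _ _; rewrite -ltz_nat PoszD ci ci'; lia.
  by move/(congr1 Posz); rewrite ci ci' => /addIr/addIr.
by apply/rowP => j; have [->|/off_i] := eqVneq j i.
Qed.

End VoronoiCell.

Lemma card_boundaryZ_le (R : realType) k (C : set (Zk k)) n (L P : nat) (r : R) :
  (forall m, exists c, C c /\ sqnormz (m - c) < (L ^ 2)%:Z) -> 0 < r -> r <= P%:R ->
  (#|` fset_set (boundaryZ r (voronoiZ C n))| <=
     2 * k * (2 * (L + P)).+1 ^ k.-1 * (2 * P * k))%N.
Proof.
case: k C n => [|k] C n C_dense r_gt0 r_le_P.
  rewrite (_ : boundaryZ _ _ = set0) ?fset_set0 ?cardfs0 //.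
  by apply/seteqP; split => // p /boundary_dir_exists[[]].
set H := (L + P)%N; set T := (2 * P * k.+1)%N.
have P_gt0 : (0 < P)%N by rewrite -(ltr0n R) (lt_le_trans r_gt0 r_le_P).
have T_gt0 : (0 < T)%N by rewrite !muln_gt0 P_gt0.
pose dir p : 'I_k.+1 * bool := xget (ord0, false) [set z | boundary_dir C n r z.1 z.2 p].
have dirP p : boundaryZ r (voronoiZ C n) p -> boundary_dir C n r (dir p).1 (dir p).2 p.
  move=> /boundary_dir_exists[i [s dir_p]].
  by apply: (@xgetPex _ _ [set z | boundary_dir C n r z.1 z.2 p]); exists (i, s).
pose psi p := (dir p, ([ffun j => boxcode n H p (lift (dir p).1 j)],
  Ordinal (ltn_pmod (boxcode n H p (dir p).1) T_gt0))).
apply: (@leq_trans #|{: ('I_k.+1 * bool) * ({ffun 'I_k -> 'I_(2 * H).+1} * 'I_T)}|).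
  apply: (geq_card_fset_set_inj (f := psi)).
    exact: (boundaryZ_finite n C_dense r_gt0 r_le_P).
  move=> p p' /set_mem Bp /set_mem Bp' [dir_eq]; rewrite -dir_eq => /ffunP same_code same_res.
  have := dirP p Bp; have := dirP p' Bp'; rewrite -dir_eq.
  case: (dir p) same_code same_res => i s /= same_code same_res dir_p' dir_p.
  apply: (boundary_dir_code_inj C_dense r_gt0 r_le_P dir_p dir_p' Bp Bp' _ same_res) => j.
  case: (unliftP i j) => [j' -> _|->]; last by rewrite eqxx.
  by have := same_code j'; rewrite !ffunE.
by rewrite !card_prod card_ffun !card_ord card_bool /=; nia.
Qed.

Definition cell_threshold (k P : nat) : nat :=
  P + 2 * k * ((2 * P * k) ^ 2 * (8 * k) ^ k.-1).

(* With [M = 2 (L / 2k) + 1] one has [L < 2kM], so [2 (L + P) + 1 <= 8kM] and the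
   threshold forces [(2Pk)^2 (8k)^(k-1) <= M]. *)
Lemma cell_threshold_cube k P L : (cell_threshold k P <= L)%N ->
  (P * (2 * k * (2 * (L + P)).+1 ^ k.-1 * (2 * P * k)) <= (2 * (L %/ (2 * k))).+1 ^ k)%N.
Proof.
case: k => [|k]; first by rewrite !muln0.
rewrite /cell_threshold /= => le_L; set M := (2 * (L %/ _)).+1.
have L_lt : (L < 2 * k.+1 * M)%N.
  apply: leq_trans (ltn_ceil L (isT : 0 < 2 * k.+1)%N) _.
  by rewrite mulnC leq_pmul2l // /M; lia.
have side_le : ((2 * (L + P)).+1 <= 8 * k.+1 * M)%N by nia.
have coef_le : ((2 * P * k.+1) ^ 2 * (8 * k.+1) ^ k <= M)%N.
  by rewrite -(leq_pmul2l (isT : 0 < 2 * k.+1)%N); nia.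
have pow_le e : ((2 * (L + P)).+1 ^ e <= (8 * k.+1 * M) ^ e)%N.
  by case: e => [//|e]; rewrite leq_exp2r.
rewrite (_ : P * _ = (2 * P * k.+1) ^ 2 * (2 * (L + P)).+1 ^ k)%N; last by nia.
apply: leq_trans (leq_mul (leqnn _) (pow_le k)) _.
by rewrite (expnMn (8 * k.+1)) mulnA (expnS M k) leq_mul2r coef_le orbT.
Qed.

Lemma voronoiZ_boundary_ratio (R : realType) k (C : set (Zk k)) n (L P : nat) (r : R) :
  (forall m, exists c, C c /\ sqnormz (m - c) < (L ^ 2)%:Z) ->
  (forall c, C c -> c <> n -> (L ^ 2)%:Z <= sqnormz (c - n)) ->
  0 < r -> r < P%:R -> (cell_threshold k P <= L)%N ->
  let V := voronoiZ C n in let B := boundaryZ r V in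
  finite_set V /\ finite_set B /\
  (#|` fset_set B|)%fset%:R / (#|` fset_set V|)%fset%:R < r^-1.
Proof.
move=> C_dense C_sep r_gt0 r_lt_P le_L V B; rewrite {}/B {}/V; have r_le_P := ltW r_lt_P.
split; first exact: voronoiZ_finite C_dense.
split; first exact: (boundaryZ_finite n C_dense r_gt0 r_le_P).
have := cell_threshold_cube le_L.
move: (card_boundaryZ_le n C_dense r_gt0 r_le_P) (card_voronoiZ_ge C_dense C_sep).
move: (#|` fset_set (boundaryZ _ _)|)%fset (#|` fset_set (voronoiZ _ _)|)%fset.
move=> nB nV cardB cardV cube.
have nV_gt0 : (0 < nV)%N by rewrite (leq_trans _ cardV) ?expn_gt0.
have PnB_le : (P * nB <= nV)%N.
  exact: leq_trans (leq_mul (leqnn P) cardB) (leq_trans cube cardV).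
rewrite ltr_pdivrMr ?ltr0n // -(ltr_pM2l r_gt0) mulrA mulfV ?gt_eqF // mul1r.
have [->|nB_gt0] := posnP nB; first by rewrite mulr0 ltr0n.
apply: (lt_le_trans (y := P%:R * nB%:R)); first by rewrite ltr_pM2r ?ltr0n.
by rewrite -natrM ler_nat.
Qed.

Section CentreSet.
Variables (R : realType) (k : nat) (Z : Type) (S : Zk k -> Z -> Z).
Variables (U : set Z) (x : Z) (L : nat).
Hypotheses (S0 : forall z, S 0 z = z) (SD : forall m n z, S (m + n) z = S m (S n z)).

Lemma Cset_dense : (forall z, exists n, znorm (R:=R) n < L%:R /\ (S n @` U) z) ->
  forall m, exists c, Cset S U x c /\ sqnormz (m - c) < (L ^ 2)%:Z.
Proof.
move=> U_cover m; have [v [v_lt [u Uu Svu]]] := U_cover (S m x).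
exists (m - v); split; last by rewrite opprB addrC subrK -(znorm_lt R).
by rewrite /Cset /= addrC SD -Svu -SD addNr S0.
Qed.

Lemma Cset_separated : (forall n, 0 < znorm (R:=R) n < L%:R -> U `&` (S n @` U) = set0) ->
  forall c n, Cset S U x c -> Cset S U x n -> c <> n -> (L ^ 2)%:Z <= sqnormz (c - n).
Proof.
move=> U_sep c n Cc Cn c_neq_n; rewrite leNgt -(znorm_lt R); apply/negP => lt_cn.
have cn_gt0 : 0 < znorm (R:=R) (c - n).
  rewrite znormE sqrtr_gt0 ltr0z lt_def sqnormz_ge0 andbT.
  by apply: contra_notN c_neq_n => /eqP/sqnormz_eq0/eqP; rewrite subr_eq0 => /eqP.
suff : (U `&` (S (c - n) @` U)) (S c x) by rewrite U_sep ?cn_gt0.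
by split; [exact: Cc | exists (S n x); rewrite // -SD subrK].
Qed.

End CentreSet.

Lemma VcellZE (R : realType) k (Z : Type) (S : Zk k -> Z -> Z) U x n :
  VcellZ R S U x n = voronoiZ (Cset S U x) n.
Proof.
apply/seteqP; split => m /= Vm c Cc; have := Vm c Cc.
  by rewrite -!toRB (znorm_le_znorm R).
by rewrite -!toRB -(znorm_le_znorm R).
Qed.

Lemma bdryZE (R : realType) k (r : R) (A : set (Zk k)) : 0 <= r -> bdryZ r A = boundaryZ r A.
Proof.
move=> r_ge0; apply/seteqP; split => p [[a [Aa pa]] [b [nAb pb]]].
  by split; [exists a | exists b]; rewrite -znorm_le.
by split; [exists a | exists b]; rewrite znorm_le.
Qed.

Unset Implicit Arguments.

Theorem lemma3p5 (R : realType) (k : nat) (Z : pseudoMetricType R)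
  (S : Zk k -> Z -> Z) :
  compact [set: Z] -> hausdorff_space Z ->
  is_action S -> free_action S -> zero_dim Z ->
  forall r : R, 0 < r ->
  exists L0 : R, 0 < L0 /\
  forall (L : nat) (U : set Z), (0 < L)%N -> L0 <= L%:R -> clopen U ->
    (forall z : Z, exists n : Zk k, znorm (R:=R) n < L%:R /\ (S n @` U) z) ->
    (forall n : Zk k, 0 < znorm (R:=R) n < L%:R -> U `&` (S n @` U) = set0) ->
    forall (x : Z) (n : Zk k), Cset S U x n ->
      let V := VcellZ R S U x n in
      let B := bdryZ r V in
      finite_set V /\ finite_set B /\
      ((#|` fset_set B|)%fset%:R / (#|` fset_set V|)%fset%:R < r^-1).
Proof.
move=> _ _ [S0 [SD _]] _ _ r r_gt0.
pose P := (Num.truncn r).+1; have r_lt_P : r < P%:R := truncnS_gt r.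
exists (cell_threshold k P)%:R; split; first by rewrite ltr0n addn_gt0.
move=> L U _ le_L _ U_cover U_sep x n Cn V B.
rewrite /B /V VcellZE bdryZE ?ltW //.
apply: voronoiZ_boundary_ratio r_gt0 r_lt_P _.
- exact: Cset_dense S0 SD U_cover.
- by move=> c Cc; apply: Cset_separated SD U_sep c n Cc Cn.
- by rewrite -(ler_nat R).
Qed.
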